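(* Let $F$ be an $r$-configuration of $U$ and $V$ and let $k\ge1$. Then the set of pairs of $F$ incident to elements of $A_k(\Phi(F))$ equals the set of pairs of $F$ incident to elements of $B_k(\Phi(F))$.
   Context: $n,r\ge1$, $m=rn$. $U=\{u_1\prec\cdots\prec u_n\}$, $V=\{v_1\prec\cdots\prec v_n\}$; $\overline U=U\times[r]$, $\overline V=V\times[r]$ ordered lexicographically (write $u^s$ for $(u,s)$). An $r$-configuration is a bijection between $\overline U$ and $\overline V$. Pairs $(\bar u,\bar v),(\bar u',\bar v')$ are noncrossing if ($\bar u\prec\bar u'$ and $\bar v\prec\bar v'$) or ($\bar u'\prec\bar u$ and $\bar v'\prec\bar v$). For an $r$-configuration $F$: for $\bar u\in\overline U$ with pair $(\bar u,\bar v')\in F$, $a_{\bar u}$ is the maximum size of a set of pairwise noncrossing pairs of $F$ containing $(\bar u,\bar v')$ all of whose pairs $(x,y)$ satisfy $x\preceq\bar u$, $y\preceq\bar v'$; $b_{\bar v}$ is defined symmetrically for $\bar v\in\overline V$. $\Phi(F)=a_{u_1^1}\cdots a_{u_n^r}|b_{v_1^1}\cdots b_{v_n^r}$ (a walk with positive steps $e_{a_{\bar u}}$ followed by negative steps $-e_{b_{\bar v}}$). For such a walk $w$, $A_k(w)=\{\bar u: a_{\bar u}=k\}$, $B_k(w)=\{\bar v:b_{\bar v}=k\}$. *)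

From mathcomp Require Import all_boot.
Set Implicit Arguments. Unset Strict Implicit. Unset Printing Implicit Defensive.

(* U = {u_1 < ... < u_n} is modelled by 'I_n (natural order), likewise V.
   Ubar = U x [r] is 'I_n * 'I_r with the lexicographic order. *)
Definition bar (n r : nat) := ('I_n * 'I_r)%type.

Definition lexlt n r (x y : bar n r) : bool :=
  (x.1 < y.1)%N || ((x.1 == y.1) && (x.2 < y.2)%N).
Definition lexle n r (x y : bar n r) : bool := (x == y) || lexlt x y.

Definition r_configuration n r (f : bar n r -> bar n r) : Prop := bijective f.

Definition pairs n r (f : bar n r -> bar n r) : {set bar n r * bar n r} :=
  [set (x, f x) | x : bar n r].

Definition noncrossing n r (p q : bar n r * bar n r) : bool :=
  (lexlt p.1 q.1 && lexlt p.2 q.2) || (lexlt q.1 p.1 && lexlt q.2 p.2).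

Definition nc_subset n r (f : bar n r -> bar n r) (S : {set bar n r * bar n r}) :=
  (S \subset pairs f) &&
  [forall p in S, forall q in S, (p != q) ==> noncrossing p q].

Definition a_lab n r (f : bar n r -> bar n r) (u : bar n r) : nat :=
  \max_(S : {set bar n r * bar n r} |
          [&& nc_subset f S, (u, f u) \in S &
              [forall p in S, lexle p.1 u && lexle p.2 (f u)]]) #|S|.

Definition b_lab n r (f : bar n r -> bar n r) (v : bar n r) : nat :=
  \max_(S : {set bar n r * bar n r} |
          [exists u', [&& (u', v) \in pairs f, nc_subset f S, (u', v) \in S &
              [forall p in S, lexle p.1 u' && lexle p.2 v]]]) #|S|.

(* A walk a_{u_1^1} ... a_{u_n^r} | b_{v_1^1} ... b_{v_n^r} is recorded by its
   labels indexed by Ubar (positive steps) and Vbar (negative steps). *)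
Record walk n r := Walk { wpos : bar n r -> nat; wneg : bar n r -> nat }.

Definition Phi n r (f : bar n r -> bar n r) : walk n r :=
  Walk (a_lab f) (b_lab f).

Definition A_k n r (w : walk n r) (k : nat) : {set bar n r} :=
  [set u | wpos w u == k].
Definition B_k n r (w : walk n r) (k : nat) : {set bar n r} :=
  [set v | wneg w v == k].

Definition pairs_incident_U n r (f : bar n r -> bar n r) (A : {set bar n r}) :=
  [set p in pairs f | p.1 \in A].
Definition pairs_incident_V n r (f : bar n r -> bar n r) (B : {set bar n r}) :=
  [set p in pairs f | p.2 \in B].

From mathcomp Require Import all_boot.

(* The a-label of u and the b-label of f u maximise over the same family of
   sets: the only pair of F with second coordinate f u is (u, f u). *)

Lemma mem_pairs_inj n r (f : bar n r -> bar n r) (u v : bar n r) :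
  injective f -> ((u, f v) \in pairs f) = (u == v).
Proof.
move=> finj; apply/imsetP/eqP => [[x _ [-> /finj ->]] // | ->].
by exists v.
Qed.

Lemma a_lab_b_lab n r (f : bar n r -> bar n r) (u : bar n r) :
  injective f -> a_lab f u = b_lab f (f u).
Proof.
move=> finj; apply: eq_bigl => S; apply/idP/existsP => [labS | [u']].
  by exists u; rewrite mem_pairs_inj // eqxx.
by rewrite mem_pairs_inj // => /andP [/eqP ->].
Qed.

Theorem lemma4 (n r : nat) (f : bar n r -> bar n r) (k : nat) :
  (1 <= n)%N -> (1 <= r)%N -> r_configuration f -> (1 <= k)%N ->
  pairs_incident_U f (A_k (Phi f) k) = pairs_incident_V f (B_k (Phi f) k).
Proof.
move=> _ _ /bij_inj finj _; apply/setP => p; rewrite !inE.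
case: (boolP (p \in pairs f)) => // /imsetP [u _ ->] /=.
by rewrite a_lab_b_lab.
Qed.
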